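(* Let $(x,y)$ be a Nash equilibrium (possibly mixed) of the input $2\times2$ game, where player 1 plays row 0 with probability $x$ and player 2 plays column 0 with probability $y$. Then for every initial state $|\psi_{\mathrm{in}}\rangle$, the profile $\tau_1=(x,1-x,0,0)$, $\tau_2=(y,1-y,0,0)$ (i.e. each player uses only the actions $C\times\mathds{1}$, $C\times\sigma_x$ with the equilibrium probabilities) is a Nash equilibrium of the eMW game, and it yields the same payoffs as $(x,y)$ in the input game.
   Context: Input game: $2\times2$ bimatrix game with payoff pairs $(a_{ij},b_{ij})$, $i,j\in\{0,1\}$ (player 1 chooses $i$, player 2 chooses $j$). $\sigma_x=\begin{pmatrix}0&1\\1&0\end{pmatrix}$. eMW game: each player has pure strategies $C\times\mathds{1},C\times\sigma_x,Q\times\mathds{1},Q\times\sigma_x$; mixed strategies $\tau_1=(p_1,\dots,p_4)$, $\tau_2=(q_1,\dots,q_4)$ in this order. With $\rho_{\mathrm{in}}=|\psi_{\mathrm{in}}\rangle\langle\psi_{\mathrm{in}}|$, $\rho_{00}=|00\rangle\langle00|$, the final state is $\rho_{\mathrm{ext}}=[(p_1q_1+p_1q_3+p_3q_1)\rho_{00}+p_3q_3\rho_{\mathrm{in}}]+(\mathds{1}\otimes\sigma_x)[(p_1q_2+p_1q_4+p_3q_2)\rho_{00}+p_3q_4\rho_{\mathrm{in}}](\mathds{1}\otimes\sigma_x)+(\sigma_x\otimes\mathds{1})[(p_2q_1+p_2q_3+p_4q_1)\rho_{00}+p_4q_3\rho_{\mathrm{in}}](\sigma_x\otimes\mathds{1})+(\sigma_x\otimes\sigma_x)[(p_2q_2+p_2q_4+p_4q_2)\rho_{00}+p_4q_4\rho_{\mathrm{in}}](\sigma_x\otimes\sigma_x)$,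 and the payoff pair is $\mathrm{tr}(X\rho_{\mathrm{ext}})$ with $X=\sum_{ij}(a_{ij},b_{ij})|ij\rangle\langle ij|$ (first component to player 1, second to player 2). Nash equilibrium is in the usual sense for mixed strategies. *)

(* Complex scalars: an arbitrary numClosedFieldType C
   (e.g. algC); real quantities are elements x with x \is Num.real. *)
From HB Require Import structures.
From mathcomp Require Import all_boot all_order all_algebra.
Set Implicit Arguments. Unset Strict Implicit. Unset Printing Implicit Defensive.
Import Order.TTheory GRing.Theory Num.Theory.
Local Open Scope ring_scope.

Section QGame.
Variable C : numClosedFieldType.

Definition pay2x2 (u : 'I_2 -> 'I_2 -> C) (x y : C) : C :=
  x * y * u 0 0 + x * (1 - y) * u 0 1 + (1 - x) * y * u 1 0
  + (1 - x) * (1 - y) * u 1 1.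

Definition prob (x : C) : Prop := 0 <= x /\ x <= 1.

Definition NE2x2 (a b : 'I_2 -> 'I_2 -> C) (x y : C) : Prop :=
  prob x /\ prob y /\
  (forall x', prob x' -> pay2x2 a x' y <= pay2x2 a x y) /\
  (forall y', prob y' -> pay2x2 b x y' <= pay2x2 b x y).

(* computational basis |ij> of C^2 (x) C^2, index 2*i + j *)
Definition idx (i j : 'I_2) : 'I_4 := inord (2 * i + j).
Definition ket (i j : 'I_2) : 'cV[C]_4 := delta_mx (idx i j) 0.

Definition kron (A B : 'M[C]_2) : 'M[C]_4 :=
  \matrix_(k < 4, l < 4)
     (A (inord (k %/ 2)) (inord (l %/ 2)) * B (inord (k %% 2)) (inord (l %% 2))).

Definition sigx : 'M[C]_2 := \matrix_(i < 2, j < 2) (i != j)%:R.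
Definition id2 : 'M[C]_2 := 1%:M.

Definition adjv (v : 'cV[C]_4) : 'rV[C]_4 := (map_mx Num.conj v)^T.
Definition proj (v : 'cV[C]_4) : 'M[C]_4 := v *m adjv v.

Definition rho00 : 'M[C]_4 := proj (ket 0 0).

Definition obsX (u : 'I_2 -> 'I_2 -> C) : 'M[C]_4 :=
  \sum_(i < 2) \sum_(j < 2) u i j *: proj (ket i j).

(* mixed strategies over (C x 1, C x sx, Q x 1, Q x sx); pr p k = p_{k+1} *)
Definition pr (p : 'I_4 -> C) (k : nat) : C := p (inord k).

Definition mixed4 (p : 'I_4 -> C) : Prop :=
  (forall k, 0 <= p k) /\ \sum_(k < 4) p k = 1.

Definition rho_ext (rin : 'M[C]_4) (p q : 'I_4 -> C) : 'M[C]_4 :=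
  let p1 := pr p 0 in let p2 := pr p 1 in let p3 := pr p 2 in let p4 := pr p 3 in
  let q1 := pr q 0 in let q2 := pr q 1 in let q3 := pr q 2 in let q4 := pr q 3 in
  ((p1*q1 + p1*q3 + p3*q1) *: rho00 + (p3*q3) *: rin)
  + kron id2 sigx *m ((p1*q2 + p1*q4 + p3*q2) *: rho00 + (p3*q4) *: rin) *m kron id2 sigx
  + kron sigx id2 *m ((p2*q1 + p2*q3 + p4*q1) *: rho00 + (p4*q3) *: rin) *m kron sigx id2
  + kron sigx sigx *m ((p2*q2 + p2*q4 + p4*q2) *: rho00 + (p4*q4) *: rin) *m kron sigx sigx.

Definition payEMW (u : 'I_2 -> 'I_2 -> C) (rin : 'M[C]_4) (p q : 'I_4 -> C) : C :=
  \tr (obsX u *m rho_ext rin p q).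

Definition NE_EMW (a b : 'I_2 -> 'I_2 -> C) (rin : 'M[C]_4) (p q : 'I_4 -> C) : Prop :=
  mixed4 p /\ mixed4 q /\
  (forall p', mixed4 p' -> payEMW a rin p' q <= payEMW a rin p q) /\
  (forall q', mixed4 q' -> payEMW b rin p q' <= payEMW b rin p q).

Definition classical_strat (x : C) : 'I_4 -> C :=
  fun k => if val k == 0%N then x else if val k == 1%N then 1 - x else 0.

End QGame.

(* Against an opponent who never plays a quantum action Q x _, the final
   state contains no copy of rho_in, and Q x 1, Q x sx act exactly like
   C x 1, C x sx.  So the eMW payoff of a strategy p against a classical
   strategy equals the input-game payoff of the mixed action playing row 0
   with probability p_1 + p_3; deviations in the eMW game are therefore no
   better than deviations in the input game. *)
From HB Require Import structures.
From mathcomp Require Import all_boot all_order all_algebra ring.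
Set Implicit Arguments. Unset Strict Implicit. Unset Printing Implicit Defensive.
Import Order.TTheory GRing.Theory Num.Theory.
Local Open Scope ring_scope.

Section EMWPayoff.
Variable C : numClosedFieldType.

Lemma idxE (i j : 'I_2) : nat_of_ord (idx i j) = (2 * i + j)%N.
Proof. by rewrite /idx inordK //; case: i j => [[|[|i]] Hi] [[|[|j]] Hj]. Qed.

Lemma idx_eq (i j k l : 'I_2) : (idx i j == idx k l) = (i == k) && (j == l).
Proof.
rewrite -(inj_eq val_inj) /= !idxE.
by case: i j k l => [[|[|i]] Hi] [[|[|j]] Hj] [[|[|k]] Hk] [[|[|l]] Hl].
Qed.

Lemma kronE (A B : 'M[C]_2) (i j k l : 'I_2) :
  kron A B (idx i j) (idx k l) = A i k * B j l.
Proof.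
have divE (i' j' : 'I_2) : (inord (idx i' j' %/ 2) : 'I_2) = i'.
  by apply/val_inj; rewrite /= idxE inordK; case: i' j' => [[|[|?]] ?] [[|[|?]] ?].
have modE (i' j' : 'I_2) : (inord (idx i' j' %% 2) : 'I_2) = j'.
  by apply/val_inj; rewrite /= idxE inordK; case: i' j' => [[|[|?]] ?] [[|[|?]] ?].
by rewrite /kron mxE !divE !modE.
Qed.

Lemma proj_ket (i j : 'I_2) : proj (ket C i j) = delta_mx (idx i j) (idx i j).
Proof.
rewrite /proj /adjv /ket.
have -> : map_mx Num.conj (delta_mx (idx i j) 0 : 'cV[C]_4) = delta_mx (idx i j) 0.
  by apply/matrixP => r s; rewrite !mxE conjC_nat.
by rewrite trmx_delta mul_delta_mx.
Qed.

Lemma mxtrace_delta_mul (k : 'I_4) (M : 'M[C]_4) : \tr (delta_mx k k *m M) = M k k.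
Proof.
rewrite /mxtrace (bigD1 k) //= big1 => [|t /negbTE tk].
  rewrite mxE (bigD1 k) //= big1 => [|t /negbTE tk]; rewrite !mxE ?eqxx ?tk.
    by rewrite mul1r !addr0.
  by rewrite mul0r.
by rewrite mxE big1 // => v _; rewrite !mxE tk mul0r.
Qed.

Lemma mulmx_delta_mulmx (A B : 'M[C]_4) (k : 'I_4) :
  A *m delta_mx k k *m B = \matrix_(r, s) (A r k * B k s).
Proof.
apply/matrixP => r s; rewrite !mxE (bigD1 k) //= big1 => [|t /negbTE tk].
  rewrite mxE (bigD1 k) //= big1 => [|t /negbTE tk]; rewrite !mxE ?eqxx ?tk.
    by rewrite mulr1 !addr0.
  by rewrite mulr0.
by rewrite mxE big1 ?mul0r // => v _; rewrite !mxE tk andbF mulr0.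
Qed.

Lemma mxtrace_obsX (u : 'I_2 -> 'I_2 -> C) (M : 'M[C]_4) :
  \tr (obsX u *m M) = \sum_(i < 2) \sum_(j < 2) u i j * M (idx i j) (idx i j).
Proof.
rewrite /obsX mulmx_suml raddf_sum; apply: eq_bigr => i _.
rewrite mulmx_suml raddf_sum; apply: eq_bigr => j _.
by rewrite -scalemxAl /= mxtraceZ proj_ket mxtrace_delta_mul.
Qed.

Lemma payEMW_rin0 (u : 'I_2 -> 'I_2 -> C) (p q : 'I_4 -> C) :
  payEMW u 0 p q =
    (pr p 0 * pr q 0 + pr p 0 * pr q 2 + pr p 2 * pr q 0) * u 0 0
  + (pr p 0 * pr q 1 + pr p 0 * pr q 3 + pr p 2 * pr q 1) * u 0 1
  + (pr p 1 * pr q 0 + pr p 1 * pr q 2 + pr p 3 * pr q 0) * u 1 0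
  + (pr p 1 * pr q 1 + pr p 1 * pr q 3 + pr p 3 * pr q 1) * u 1 1.
Proof.
rewrite /payEMW /rho_ext /= !scaler0 !addr0 -!scalemxAr -!scalemxAl mxtrace_obsX.
rewrite !big_ord_recl !big_ord0 /rho00 !proj_ket.
have -> : lift ord0 ord0 = 1 :> 'I_2 by exact: val_inj.
rewrite !mulmx_delta_mulmx [kron]lock !mxE -lock !kronE !mxE !idx_eq /=.
ring.
Qed.

Definition classical4 (p : 'I_4 -> C) : Prop := pr p 2 = 0 /\ pr p 3 = 0.

Lemma rho_ext_one_classical (rin : 'M[C]_4) (p q : 'I_4 -> C) :
  classical4 p \/ classical4 q -> rho_ext rin p q = rho_ext 0 p q.
Proof.
by rewrite /rho_ext => -[[-> ->] | [-> ->]]; rewrite ?mulr0 ?mul0r !scale0r.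
Qed.

Definition weight_id (p : 'I_4 -> C) : C := pr p 0 + pr p 2.

Lemma sum_pr (p : 'I_4 -> C) :
  \sum_(k < 4) p k = pr p 0 + pr p 1 + pr p 2 + pr p 3.
Proof.
rewrite (eq_bigr (fun k : 'I_4 => pr p k)); last by move=> k _; rewrite /pr inord_val.
by rewrite !big_ord_recr big_ord0 /= add0r.
Qed.

Lemma payEMW_one_classical (u : 'I_2 -> 'I_2 -> C) (rin : 'M[C]_4) (p q : 'I_4 -> C) :
  \sum_(k < 4) p k = 1 -> \sum_(k < 4) q k = 1 ->
  classical4 p \/ classical4 q ->
  payEMW u rin p q = pay2x2 u (weight_id p) (weight_id q).
Proof.
rewrite !sum_pr /weight_id => hp hq hcl.
have -> : payEMW u rin p q = payEMW u 0 p q by rewrite /payEMW rho_ext_one_classical.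
have p_rest : 1 - (pr p 0 + pr p 2) = pr p 1 + pr p 3 by rewrite -hp; ring.
have q_rest : 1 - (pr q 0 + pr q 2) = pr q 1 + pr q 3 by rewrite -hq; ring.
rewrite payEMW_rin0 /pay2x2 p_rest q_rest.
by case: hcl => -[-> ->]; ring.
Qed.

Lemma prob_weight_id (p : 'I_4 -> C) : mixed4 p -> prob (weight_id p).
Proof.
case=> p_ge0; rewrite sum_pr /weight_id => hp.
split; first exact: addr_ge0 (p_ge0 _) (p_ge0 _).
have -> : pr p 0 + pr p 2 = 1 - (pr p 1 + pr p 3) by rewrite -hp; ring.
by rewrite lerBlDr lerDl addr_ge0 ?p_ge0.
Qed.

Lemma pr_classical_strat (x : C) :
  [/\ pr (classical_strat x) 0 = x, pr (classical_strat x) 1 = 1 - x,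
      pr (classical_strat x) 2 = 0 & pr (classical_strat x) 3 = 0].
Proof. by rewrite /pr /classical_strat /= !inordK. Qed.

Lemma classical4_classical_strat (x : C) : classical4 (classical_strat x).
Proof. by have [_ _ ? ?] := pr_classical_strat x. Qed.

Lemma weight_id_classical_strat (x : C) : weight_id (classical_strat x) = x.
Proof. by have [x0 _ x2 _] := pr_classical_strat x; rewrite /weight_id x0 x2 addr0. Qed.

Lemma mixed4_classical_strat (x : C) : prob x -> mixed4 (classical_strat x).
Proof.
case=> x_ge0 x_le1; split.
  by move=> k; rewrite /classical_strat; do 2?case: ifP => _ //; rewrite subr_ge0.
have [x0 x1 x2 x3] := pr_classical_strat x.
by rewrite sum_pr x0 x1 x2 x3; ring.
Qed.

End EMWPayoff.

Theorem mainTheorem4 (C : numClosedFieldType)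
    (a b : 'I_2 -> 'I_2 -> C)
    (a_real : forall i j, a i j \is Num.real)
    (b_real : forall i j, b i j \is Num.real)
    (x y : C) (hNE : NE2x2 a b x y)
    (psi : 'cV[C]_4) (psi_unit : adjv psi *m psi = 1%:M) :
  NE_EMW a b (proj psi) (classical_strat x) (classical_strat y) /\
  payEMW a (proj psi) (classical_strat x) (classical_strat y) = pay2x2 a x y /\
  payEMW b (proj psi) (classical_strat x) (classical_strat y) = pay2x2 b x y.
Proof.
case: hNE => px [py [a_best b_best]].
have [mx my] := (mixed4_classical_strat px, mixed4_classical_strat py).
have pay_a p : mixed4 p ->
    payEMW a (proj psi) p (classical_strat y) = pay2x2 a (weight_id p) y.
  case=> _ hp; rewrite payEMW_one_classical ?weight_id_classical_strat //; first by case: my.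
  by right; exact: classical4_classical_strat.
have pay_b q : mixed4 q ->
    payEMW b (proj psi) (classical_strat x) q = pay2x2 b x (weight_id q).
  case=> _ hq; rewrite payEMW_one_classical ?weight_id_classical_strat //; first by case: mx.
  by left; exact: classical4_classical_strat.
split; last by rewrite pay_a // pay_b // !weight_id_classical_strat.
do 3?split => //.
- by move=> p hp; rewrite !pay_a // weight_id_classical_strat; exact/a_best/prob_weight_id.
- by move=> q hq; rewrite !pay_b // weight_id_classical_strat; exact/b_best/prob_weight_id.
Qed.
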